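(* Let $\ell>0$ and let $\tilde X$ be distributed as $X\sim N(0,1)$ conditioned on $X>\ell$. Then $\Pr[|\tilde X|>t]\le2\exp(-t^2/K_1^2)$ for every $t>0$, where $K_1=\max\{\sqrt{20},|\ell|\sqrt{10}\}$. *)

From HB Require Import structures.
From mathcomp Require Import all_boot all_order all_algebra.
From mathcomp Require Import all_classical all_reals all_analysis.
From mathcomp Require Import normal_distribution.
Set Implicit Arguments. Unset Strict Implicit. Unset Printing Implicit Defensive.
Import Order.TTheory GRing.Theory Num.Theory.
Local Open Scope classical_set_scope.
Local Open Scope ring_scope.

Definition stdnormal {R : realType} : set R -> \bar R := normal_prob 0 1.

Definition cond_normal {R : realType} (A B : set R) : R :=
  fine (stdnormal (A `&` B)) / fine (stdnormal B).

From HB Require Import structures.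
From mathcomp Require Import all_boot all_order all_algebra.
From mathcomp Require Import all_classical all_reals all_analysis.
From mathcomp Require Import normal_distribution.
From mathcomp Require Import lra measurable_realfun.
Import Order.TTheory GRing.Theory Num.Theory numFieldNormedType.Exports.
Local Open Scope classical_set_scope.
Local Open Scope ring_scope.

(* For x >= l and d >= 0 the standard Gaussian density satisfies
   phi(x + d) <= exp(-((l + d)^2 - l^2) / 2) phi(x), so translating the tail
   (l, +oo) by d = t - l gives Pr[X > t | X > l] <= exp(-(t^2 - l^2) / 2) for
   t >= l; for t <= l the conditional probability is at most 1, and when l > 0
   the event |X| > t on X > l is just X > t.  Since K^2 >= 20 and K^2 >= 10 l^2,
   each of these exponents is at most -t^2/K^2 + 1/10, and exp(1/10) <= 2. *)

Section normal_upper_tail.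
Context {R : realType}.
Local Notation phi := (@normal_pdf R 0 1).
Local Notation P := (@normal_prob R 0 1).

Lemma normal_pdf01_shift_le (l d x : R) : 0 <= d -> l <= x ->
  phi (x + d) <= expR (- ((l + d) ^+ 2 - l ^+ 2) / 2) * phi x.
Proof.
move=> d0 lx; rewrite normal_pdfE ?oner_neq0 //= mulrCA.
rewrite ler_pM2l; last exact/normal_peak_gt0/oner_neq0.
rewrite /normal_fun -expRD ler_expR !subr0 expr1n -mulrDl.
by rewrite ler_pM2r ?invr_gt0 ?ltr0n //; nra.
Qed.

Lemma normal_prob_fineK (m s : R) (A : set R) : measurable A ->
  (fine (normal_prob m s A))%:E = normal_prob m s A.
Proof. by move=> mA; rewrite fineK // fin_num_measure. Qed.

Lemma normal_prob01_itv_shift_le (l d : R) : 0 <= d ->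
  (P `](l + d)%R, +oo[ <= (expR (- ((l + d) ^+ 2 - l ^+ 2) / 2))%:E * P `]l, +oo[)%E.
Proof.
move=> d0; rewrite /normal_prob.
have mphi A : measurable_fun A (EFin \o phi).
  by apply/measurable_EFinP/measurable_funTS; exact: measurable_normal_pdf.
rewrite !integral_itv_obnd_cbnd //.
have shift_incr : {in `[l, +oo[ &, {homo (fun x => x + d) : x y / x < y}}.
  by move=> x y _ _; rewrite ltrD2r.
have shift'E : (fun x : R => x + d)^`()%classic = cst 1.
  by apply/funext => x; rewrite derive1E deriveD // derive_id derive_cst addr0.
rewrite (@increasing_ge0_integration_by_substitutiony _ (fun x => x + d) phi l) //=.
- rewrite shift'E -ge0_integralZl_EFin //=; last 2 first.
  + by move=> x _; rewrite lee_fin normal_pdf_ge0.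
  + exact: mphi.
  + apply: ge0_le_integral => //=.
    * by move=> x _; rewrite lee_fin mulr1 normal_pdf_ge0.
    * apply/measurable_EFinP/measurable_funTS/measurable_funM => //.
      by apply: measurableT_comp; [exact: measurable_normal_pdf | exact: measurable_funD].
    * by apply: measurable_funeM; exact: mphi.
    * by move=> x; rewrite /= in_itv /= andbT lee_fin mulr1 => /normal_pdf01_shift_le->.
- by rewrite shift'E => x _; exact: cvg_cst.
- by rewrite shift'E; exact: is_cvg_cst.
- by rewrite shift'E; exact: is_cvg_cst.
- split; first by move=> x _; exact: derivableD.
  by apply: cvg_at_right_filter; apply: cvgD; [exact: cvg_id | exact: cvg_cst].
- exact: cvg_addrr.
- exact/continuous_subspaceT/continuous_normal_pdf/oner_neq0.
- by move=> x _; exact: normal_pdf_ge0.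
Qed.

Lemma cond_normal_le1 (A B : set R) : B `<=` A -> cond_normal A B <= 1.
Proof.
rewrite /cond_normal => /setIidr ->.
by have [->|B0] := eqVneq (fine (stdnormal B)) 0; rewrite ?mul0r ?divff.
Qed.

Lemma cond_normal_upper_tail_le (l t : R) : l <= t ->
  cond_normal [set x | t < x] [set x | l < x] <= expR (- (t ^+ 2 - l ^+ 2) / 2).
Proof.
move=> l_le_t.
have itvE a : [set x : R | a < x] = `]a, +oo[%classic.
  by apply/seteqP; split => x /=; rewrite in_itv /= andbT.
rewrite /cond_normal /stdnormal setIidl; last by move=> x /=; exact: le_lt_trans.
rewrite !itvE.
have := @normal_prob01_itv_shift_le l (t - l); rewrite subr_ge0 subrKC => /(_ l_le_t).
rewrite -(normal_prob_fineK 0 1 `]t, +oo[%classic) //.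
rewrite -(normal_prob_fineK 0 1 `]l, +oo[%classic) // -EFinM lee_fin => tail.
have [->|q0] := eqVneq (fine (P `]l, +oo[)) 0; first by rewrite invr0 mulr0 expR_ge0.
by rewrite ler_pdivrMr // lt_def q0 fine_ge0 // normal_prob_fineK // measure_ge0.
Qed.

Lemma cond_normal_abs_tail_le (l t : R) : 0 <= l ->
  cond_normal [set x | t < `|x|] [set x | l < x]
  <= expR (- (Num.max t l ^+ 2 - l ^+ 2) / 2).
Proof.
move=> l0.
have absE : [set x | t < `|x|] `&` [set x | l < x] = [set x | t < x] `&` [set x | l < x].
  by apply/seteqP; split=> x /= [tx lx]; rewrite ger0_norm ?(le_trans l0 (ltW lx)) in tx *.
rewrite [cond_normal _ _]/cond_normal absE -/(cond_normal _ _).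
have [tl|lt] := leP t l.
  rewrite subrr oppr0 mul0r expR0.
  by apply: cond_normal_le1 => x /=; exact: le_lt_trans.
by apply: cond_normal_upper_tail_le; exact: ltW.
Qed.

End normal_upper_tail.

Section subgaussian_constant.
Context {R : realType}.

Lemma expR_le_2_expR (a b : R) : a <= b + 10^-1 -> expR a <= 2 * expR b.
Proof.
move=> ab; apply: (@le_trans _ _ (expR (b + 10^-1))); first by rewrite ler_expR.
rewrite expRD mulrC ler_pM2r ?expR_gt0 //.
have e0 := expR_gt0 (10^-1 : R).
have eN : expR (10^-1 : R) * expR (- 10^-1) = 1 by rewrite -expRD subrr expR0.
have := expR_ge1Dx (- 10^-1 : R).
nra.
Qed.

Lemma subgaussian_exponent_le (l t K : R) : 0 <= l -> 0 <= t ->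
    20 <= K ^+ 2 -> 10 * l ^+ 2 <= K ^+ 2 ->
  - (Num.max t l ^+ 2 - l ^+ 2) / 2 <= - t ^+ 2 / K ^+ 2 + 10^-1.
Proof.
move=> l0 t0 K20 Kl.
have K0 : 0 < K ^+ 2 by lra.
set v := (K ^+ 2)^-1.
have vK : v * K ^+ 2 = 1 by rewrite mulVf // gt_eqF.
have v0 : 0 < v by rewrite invr_gt0.
have v20 : v * 20 <= 1 by nra.
have vl : v * (10 * l ^+ 2) <= 1 by nra.
have [tl|lt] := leP t l.
  have : t ^+ 2 <= l ^+ 2 by nra.
  nra.
have : l ^+ 2 <= t ^+ 2 by nra.
nra.
Qed.

End subgaussian_constant.

Theorem lemma17 (R : realType) (l : R) (hl : 0 < l) (t : R) (ht : 0 < t) :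
  cond_normal [set x : R | t < `|x|] [set x : R | l < x]
  <= 2 * expR (- (t ^+ 2) / (Num.max (Num.sqrt 20) (`|l| * Num.sqrt 10)) ^+ 2).
Proof.
set K := Num.max _ _.
have sqr_le_K (a : R) : 0 <= a -> a <= K -> a ^+ 2 <= K ^+ 2.
  by move=> a0 aK; rewrite ler_sqr // nnegrE (le_trans a0 aK).
have K20 : 20 <= K ^+ 2.
  by rewrite -[X in X <= _](@sqr_sqrtr _ 20) // sqr_le_K // /K le_max lexx.
have Kl : 10 * l ^+ 2 <= K ^+ 2.
  rewrite mulrC -[X in _ * X](@sqr_sqrtr _ 10) // -exprMn sqr_le_K //.
    by rewrite mulr_ge0 ?sqrtr_ge0 // ltW.
  by rewrite /K le_max gtr0_norm // lexx orbT.
apply: le_trans (cond_normal_abs_tail_le _ t (ltW hl)) _.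
by apply: expR_le_2_expR; exact: subgaussian_exponent_le (ltW hl) (ltW ht) K20 Kl.
Qed.
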